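(* Let $R=\mathcal{C}'/[(1+\delta_a)^2(1+r/\log M)]$ with $r>r_1$, where $$r_0=\frac{1}{2(1+\delta_a)^2},\qquad r_1=\frac{r_0}{2}+\frac{\sqrt{\log M}}{\sqrt{\pi}\,(1+\delta_a)}.$$ Let $x_r$ be defined by $1-x_r=\frac{1}{snr}\cdot\frac{r}{\log M}$ (equivalently, $x_r$ is the value of $x$ with $z_x=0$). Then for all $0\le x\le x_r$ (with $x\in[0,1]$), $$g_{low}(x)-x\ \ge\ gap:=\frac{1}{snr}\cdot\frac{r-r_1}{\log M}.$$
   Context: Fix an integer $M\ge2$, $snr>0$, $\nu=snr/(1+snr)$, constants $a\ge0$, $\mathcal{C}'>0$, and $\delta_a=a/\sqrt{2\log M}$ (natural logarithm). $\Phi,\phi$ denote the standard normal distribution function and density. For $x\in[0,1]$, $u>0$: $\mu(x,u)=\big(\sqrt{u/(1-x\nu)}-1\big)\sqrt{2\log M}-a$, $u_x=1-x\nu$, $z_x=\mu(x,(1-\nu)\mathcal{C}'/R)$, and $$g_{low}(x)=\Phi(z_x)+\frac1\nu\int_{z_x}^\infty\Big[1-\frac{R}{\mathcal{C}'}u_x\Big(1+\frac{z+a}{\sqrt{2\log M}}\Big)^2\Big]\phi(z)\,dz .$$ (This $g_{low}$ is a lower bound for $g(x)=\frac1\nu\int_{1-\nu}^1\Phi(\mu(x,u\,\mathcal{C}'/R))\,du$.) *)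

From Stdlib Require Import Reals Lra.
Open Scope R_scope.

Definition phi (z : R) : R := exp (- (z * z) / 2) / sqrt (2 * PI).

Definition has_integral_from (f : R -> R) (a l : R) : Prop :=
  (forall b, a <= b -> exists pr : Riemann_integrable f a b, True) /\
  (forall eps, 0 < eps -> exists B, forall b (pr : Riemann_integrable f a b),
      B <= b -> Rabs (RiemannInt pr - l) < eps).

Definition has_integral_upto (f : R -> R) (a l : R) : Prop :=
  (forall b, b <= a -> exists pr : Riemann_integrable f b a, True) /\
  (forall eps, 0 < eps -> exists B, forall b (pr : Riemann_integrable f b a),
      b <= B -> Rabs (RiemannInt pr - l) < eps).

Definition is_Phi (z p : R) : Prop := has_integral_upto phi z p.

(* All parameters explicit: M snr a C' (and the rate R, called Rate). *)
Definition logM (M : nat) : R := ln (INR M).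
Definition nu (snr : R) : R := snr / (1 + snr).
Definition delta_a (M : nat) (a : R) : R := a / sqrt (2 * logM M).
Definition mu (M : nat) (snr a : R) (x u : R) : R :=
  (sqrt (u / (1 - x * nu snr)) - 1) * sqrt (2 * logM M) - a.
Definition u_x (snr x : R) : R := 1 - x * nu snr.
Definition z_x (M : nat) (snr a C' Rate x : R) : R :=
  mu M snr a x ((1 - nu snr) * C' / Rate).
(* integrand of the second term of g_low *)
Definition glow_integrand (M : nat) (snr a C' Rate x : R) (z : R) : R :=
  (1 - Rate / C' * u_x snr x * Rsqr (1 + (z + a) / sqrt (2 * logM M))) * phi z.
Definition r0 (M : nat) (a : R) : R := 1 / (2 * Rsqr (1 + delta_a M a)).
Definition r1 (M : nat) (a : R) : R :=
  r0 M a / 2 + sqrt (logM M) / (sqrt PI * (1 + delta_a M a)).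
Definition rate_of (M : nat) (a C' r : R) : R :=
  C' / (Rsqr (1 + delta_a M a) * (1 + r / logM M)).
Definition x_r (M : nat) (snr r : R) : R := 1 - (1 / snr) * (r / logM M).
Definition gap (M : nat) (snr a r : R) : R := (1 / snr) * ((r - r1 M a) / logM M).

From Stdlib Require Import Reals Lra.
From Coquelicot Require Import Coquelicot.
Open Scope R_scope.

(* Write L = log M, s = sqrt(2L), b0 = s + a = s (1 + delta_a), u = 1 - x nu and
   k = (R / C') u / s^2.  Then the integrand of g_low is (1 - k (t + b0)^2) phi(t),
   and integrating against the antiderivative (A + C) Phi(t) - (B + C t) phi(t) of
   (A + B t + C t^2) phi(t) gives I in closed form in terms of Phi(z) and phi(z),
   once we know that phi has mass 1/2 on [0, +oo) (the Gauss integral, imported from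
   MathComp-Analysis through a small bridge with the Stdlib reals).
   With z = z_x one has k (z + b0)^2 = 1 - nu and u = k b0^2 (1 + r/L), so that
   g_low(x) - x = (k / nu) (b0^2 r / L - h(z)) for an explicit profile h with
   h' = 2 (t + b0) Phi(t) >= 0 on [-b0, 0].  Since x <= x_r forces z in [-b0, 0] and
   k b0^2 >= 1 - nu, and r1 is defined so that h(0) = b0^2 r1 / L, the bound follows. *)

Definition gauss (t : R) : R := exp (- (t * t)).
Definition gauss_int (y : R) : R := RInt gauss 0 y.

Lemma gauss_continuous t : continuous gauss t.
Proof.
apply (ex_derive_continuous (K := R_AbsRing) (V := R_NormedModule)).
unfold gauss. auto_derive. auto.
Qed.

(* Fundamental theorem of calculus, stated with the Stdlib derivative so that it
   can be transported to MathComp-Analysis below. *)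
Lemma gauss_int_derive y : derivable_pt_lim gauss_int y (gauss y).
Proof.
apply is_derive_Reals, (is_derive_RInt gauss gauss_int 0 y).
- apply filter_forall. intros b. apply (RInt_correct (V := R_CompleteNormedModule)).
  apply (ex_RInt_continuous (V := R_CompleteNormedModule)). intros; apply gauss_continuous.
- apply gauss_continuous.
Qed.

(* The value sqrt(PI)/2 of the Gauss integral comes from MathComp-Analysis, whose
   reals specialize to the Stdlib ones (Rstruct). *)
Module GaussBridge.
From HB Require Import structures.
From mathcomp Require Import all_boot all_order all_algebra.
From mathcomp Require Import all_classical all_reals all_analysis.
From mathcomp Require Import Rstruct Rstruct_topology.
Import Order.TTheory GRing.Theory Num.Theory.
Import numFieldNormedType.Exports.
Local Open Scope classical_set_scope.
Local Open Scope ring_scope.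

Lemma derivable_pt_lim_cvg (f : R^o -> R^o) (x l : R^o) : derivable_pt_lim f x l ->
  (fun h : R^o => h^-1 *: (f (h *: 1 + x) - f x)) @ 0^' --> l.
Proof.
move=> fl; apply/cvgrPdist_lt => e /RltP e0.
have [d dP] := fl e e0.
near=> h.
have h0 : h != 0 by near: h; exact: nbhs_dnbhs_neq.
have hd : `|h| < pos d by near: h; apply: dnbhs0_lt; apply/RltP; exact: cond_pos.
have /RltP := dP h (elimN eqP h0) (RltP hd).
rewrite RabsE distrC /= -[h%:A]/(h * 1) mulr1 -[_ *: _]/(_ * _) [h + x]addrC.
by rewrite RminusE RdivE RplusE mulrC.
Unshelve. all: by end_near. Qed.

Lemma derivable_pt_lim_derive1 (f : R^o -> R^o) (x l : R^o) :
  derivable_pt_lim f x l -> derivable f x 1 /\ derive1 f x = l.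
Proof.
move=> /derivable_pt_lim_cvg fl; split; first by apply/cvg_ex; exists l.
by rewrite derive1E; exact: cvg_lim.
Qed.

(* The Stdlib and MathComp cosines agree (both are sums of the same series). *)
Lemma Rcos_cos (x : R) : Rtrigo_def.cos x = trigo.cos x.
Proof.
rewrite /Rtrigo_def.cos; case: exist_cos => y; rewrite /cos_in /infinite_sum => cos_ub.
suff cos_y : series (cos_coeff' x) @ \oo --> y by exact: (cvg_unique _ cos_y (@cvg_cos_coeff' R x)).
rewrite -cvg_shiftS /=; apply/(@cvgrPdist_lt _ R^o) => /= e /RltP /cos_ub[N NH].
near=> n.
have nN : (n >= N)%coq_nat by apply/ssrnat.leP; near: n; exact: nbhs_infty_ge.
move: NH => /(_ _ nN) /[!RdistE] /RltP /=.
rewrite distrC sum_f_R0E; congr (`| _ - _ | < e).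
apply: eq_bigr => k _; rewrite /cos_coeff' /cos_n RdivE RpowE INRE factE.
rewrite RpowE /Rsqr -exprnP !RmultE -expr2 -exprM.
have -> : (2 * k)%coq_nat = k.*2 by rewrite -mul2n.
by rewrite mul2n mulrAC.
Unshelve. all: by end_near. Qed.

Lemma R2E : IZR 2 = 2%R.
Proof. by rewrite [RHS](_ : _ = 1 + 1)%R // RplusE -R1E /IZR /=; lra. Qed.

(* Both libraries define pi as twice the first zero of cos in [0, 2]. *)
Lemma PI_pi : PI = pi.
Proof.
have PI_bnd := PI_4; have PI_gt0 := PI_RGT_0.
have PI2_ge0 : (0 <= PI / 2)%coqR by lra.
have PI2_le2 : (PI / 2 <= 2)%coqR by lra.
have PI2_itv : (0 <= (PI / 2)%coqR) && ((PI / 2)%coqR <= 2).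
  by apply/andP; split; apply/RleP; rewrite -?R2E.
have [pi2_itv cos_pi2] := @pihalf_02_cos_pihalf R.
have := cos_02_uniq PI2_itv (etrans (esym (Rcos_cos _)) cos_PI2) pi2_itv cos_pi2.
rewrite RdivE R2E => /(congr1 (fun t => t * 2)).
by rewrite !divfK // pnatr_eq0.
Qed.

(* On the Stdlib reals, the partial Gauss integrals of both libraries coincide
   (FTC2 on the MathComp side, with the Stdlib antiderivative gauss_int). *)
Lemma gauss_fun_gauss t : gauss t = gauss_fun t.
Proof. by rewrite /gauss /gauss_fun RexpE expr2 RoppE RmultE. Qed.

Lemma gauss_int_integral0 (y : R) : (0 < y)%R ->
  gauss_int y = gauss_integral_proof.integral0_gauss y.
Proof.
move=> y0; rewrite /gauss_integral_proof.integral0_gauss /Rintegral.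
have dF t : derivable (gauss_int : R^o -> R^o) t 1 /\ derive1 (gauss_int : R^o -> R^o) t = gauss_fun t.
  by rewrite -gauss_fun_gauss; apply: derivable_pt_lim_derive1; exact: gauss_int_derive.
have cF t : gauss_int x @[x --> t] --> gauss_int t.
  by apply/continuity_pt_cvg/derivable_continuous_pt; exists (gauss t); exact: gauss_int_derive.
rewrite (@continuous_FTC2 R gauss_fun gauss_int 0 y y0).
- by rewrite -EFinB /= /gauss_int RInt_point subr0.
- by apply: continuous_subspaceT => t; exact: continuous_gauss_fun.
- split; first by move=> t _; exact: (dF t).1.
  + exact: cvg_at_right_filter (cF 0).
  + exact: cvg_at_left_filter (cF y).
- by move=> t _; exact: (dF t).2.
Qed.

(* The library computes the square of the Gauss integral; its value is the
   square root of that limit since the partial integrals are nonnegative. *)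
Lemma gauss_int_cvg : gauss_int y @[y --> +oo] --> Num.sqrt pi / 2.
Proof.
have -> : Num.sqrt pi / 2 = Num.sqrt (pi / 4) :> R.
  by rewrite sqrtrM ?pi_ge0 // sqrtrV // (_ : 4 = 2 ^+ 2) ?sqrtr_sqr ?ger0_norm // expr2 -natrM.
have sq_cvg := gauss_integral_proof.cvg_integral0_gauss_sqr (R := R).
have /(continuous_cvg _ (@sqrt_continuous R _)) := sq_cvg.
apply: cvg_trans; apply: near_eq_cvg; near=> y => /=.
rewrite sqrtr_sqr ger0_norm ?gauss_integral_proof.integral0_gauss_ge0 //.
by rewrite gauss_int_integral0.
Unshelve. all: by end_near. Qed.

Lemma gauss_int_limit (eps : R) : (0 < eps)%coqR ->
  exists B, forall y, (B <= y)%coqR -> (Rabs (gauss_int y - sqrt PI / 2) < eps)%coqR.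
Proof.
move=> /RltP e0.
have /(@cvgrPdist_lt _ R^o) /(_ eps e0) [B [_ BP]] := gauss_int_cvg.
exists (B + 1)%coqR => y /RleP yB; apply/RltP.
have By : B < y by apply: lt_le_trans yB; rewrite RplusE ltrDl.
by have := BP y By; rewrite RabsE RminusE RdivE RsqrtE PI_pi -R2E distrC.
Qed.

End GaussBridge.

Lemma sqrt2PI_pos : 0 < sqrt (2 * PI).
Proof. apply sqrt_lt_R0. generalize PI_RGT_0; lra. Qed.

Lemma phi_pos t : 0 < phi t.
Proof. unfold phi. apply Rdiv_lt_0_compat; [apply exp_pos | apply sqrt2PI_pos]. Qed.

Lemma phi_derive t : is_derive phi t (- t * phi t).
Proof.
unfold phi. assert (H := sqrt2PI_pos). auto_derive; [auto|].
change (- (t * t) * / 2) with (- (t * t) / 2). field. lra.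
Qed.

Lemma phi_continuous t : continuous phi t.
Proof.
apply (ex_derive_continuous (K := R_AbsRing) (V := R_NormedModule)).
exists (- t * phi t). apply phi_derive.
Qed.

Lemma phi_ex_RInt a b : ex_RInt phi a b.
Proof. apply (ex_RInt_continuous (V := R_CompleteNormedModule)). intros; apply phi_continuous. Qed.

Lemma phi_even t : phi (- t) = phi t.
Proof. unfold phi. f_equal. f_equal. f_equal. ring. Qed.

Lemma phi_gauss t : phi t = / sqrt PI * (/ sqrt 2 * gauss (/ sqrt 2 * t + 0)).
Proof.
unfold phi, gauss. rewrite sqrt_mult by (generalize PI_RGT_0; lra).
assert (H2 : 0 < sqrt 2) by (apply sqrt_lt_R0; lra).
assert (HP : 0 < sqrt PI) by (apply sqrt_lt_R0; generalize PI_RGT_0; lra).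
assert (H22 : sqrt 2 * sqrt 2 = 2) by (apply sqrt_sqrt; lra).
replace (- (t * t) / 2) with (- ((/ sqrt 2 * t + 0) * (/ sqrt 2 * t + 0))).
- field. lra.
- field_simplify; [|lra]. replace (sqrt 2 ^ 2) with 2 by (simpl; lra). reflexivity.
Qed.

Lemma RInt_phi_gauss y : RInt phi 0 y = / sqrt PI * gauss_int (y * / sqrt 2).
Proof.
rewrite (RInt_ext phi (fun t => scal (/ sqrt PI) (scal (/ sqrt 2) (gauss (/ sqrt 2 * t + 0)))))
  by (intros; apply phi_gauss).
assert (Hex : ex_RInt (fun t => scal (/ sqrt 2) (gauss (/ sqrt 2 * t + 0))) 0 y).
{ apply (ex_RInt_continuous (V := R_CompleteNormedModule)). intros t _.
  apply (ex_derive_continuous (K := R_AbsRing) (V := R_NormedModule)).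
  unfold gauss, scal; simpl; unfold mult; simpl. auto_derive. auto. }
transitivity (scal (/ sqrt PI) (RInt (fun t => scal (/ sqrt 2) (gauss (/ sqrt 2 * t + 0))) 0 y)).
{ exact (RInt_scal (V := R_CompleteNormedModule) _ 0 y (/ sqrt PI) Hex). }
rewrite (RInt_comp_lin (V := R_CompleteNormedModule) gauss).
- unfold gauss_int, scal; simpl; unfold mult; simpl. do 2 f_equal; ring.
- apply (ex_RInt_continuous (V := R_CompleteNormedModule)). intros; apply gauss_continuous.
Qed.

Lemma is_lim_gauss_int : is_lim gauss_int p_infty (sqrt PI / 2).
Proof.
apply is_lim_spec. intros eps.
destruct (GaussBridge.gauss_int_limit eps (cond_pos eps)) as [B HB].
exists B. intros y Hy. apply HB. lra.
Qed.

Lemma is_lim_RInt_phi : is_lim (fun y => RInt phi 0 y) p_infty (1 / 2).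
Proof.
assert (H2 : 0 < sqrt 2) by (apply sqrt_lt_R0; lra).
assert (HP : 0 < sqrt PI) by (apply sqrt_lt_R0; generalize PI_RGT_0; lra).
apply is_lim_ext with (fun y => / sqrt PI * gauss_int (y * / sqrt 2)).
{ intros; symmetry; apply RInt_phi_gauss. }
replace (Finite (1 / 2)) with (Rbar_mult (/ sqrt PI) (sqrt PI / 2))
  by (simpl; f_equal; field; lra).
apply is_lim_scal_l, (is_lim_comp _ _ _ _ p_infty); [apply is_lim_gauss_int | | ].
- replace p_infty with (Rbar_mult p_infty (/ sqrt 2)) at 2.
  + apply is_lim_scal_r, is_lim_id.
  + apply is_Rbar_mult_unique, is_Rbar_mult_p_infty_pos. simpl.
    apply Rinv_0_lt_compat, H2.
- exists 0. intros y _. discriminate.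
Qed.

(* By evenness of phi, the mass on [b, 0] equals the mass on [0, -b]. *)
Lemma RInt_phi_opp b : RInt phi b 0 = RInt phi 0 (- b).
Proof.
assert (H : is_RInt (fun y => opp (phi (- y))) 0 b (RInt phi 0 (- b))).
{ apply (is_RInt_comp_opp (V := R_NormedModule)). rewrite Ropp_0.
  apply (RInt_correct (V := R_CompleteNormedModule)), phi_ex_RInt. }
apply (is_RInt_ext _ (fun y => opp (phi y))) in H; [| intros; rewrite phi_even; reflexivity].
rewrite <- (is_RInt_unique _ _ _ _ H), (RInt_opp (V := R_CompleteNormedModule)) by apply phi_ex_RInt.
symmetry. apply (opp_RInt_swap (V := R_CompleteNormedModule)), phi_ex_RInt.
Qed.

Definition Phi (t : R) : R := 1 / 2 + RInt phi 0 t.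

Lemma is_lim_Phi t : is_lim (fun b => RInt phi b t) m_infty (Phi t).
Proof.
apply is_lim_ext with (fun b => RInt phi 0 t + RInt phi 0 (- b)).
{ intros b. rewrite <- RInt_phi_opp, Rplus_comm.
  apply (RInt_Chasles (V := R_CompleteNormedModule)); apply phi_ex_RInt. }
unfold Phi. rewrite Rplus_comm. apply is_lim_plus'; [apply is_lim_const |].
apply (is_lim_comp _ _ _ _ p_infty); [apply is_lim_RInt_phi | |].
- apply (is_lim_opp (fun y => y) m_infty m_infty), is_lim_id.
- exists 0. intros y _. discriminate.
Qed.

Lemma Phi_nonneg t : 0 <= Phi t.
Proof.
apply (is_lim_le_loc (fun _ => 0) (fun b => RInt phi b t) m_infty 0 (Phi t)).
- exists t. intros b Hb. apply RInt_ge_0; [lra | apply phi_ex_RInt |].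
  intros; left; apply phi_pos.
- apply is_lim_const.
- apply is_lim_Phi.
Qed.

Lemma Phi_0 : Phi 0 = 1 / 2.
Proof. unfold Phi. rewrite (RInt_point (V := R_CompleteNormedModule)). apply Rplus_0_r. Qed.

Lemma Phi_derive t : is_derive Phi t (phi t).
Proof.
unfold Phi. replace (phi t) with (plus zero (phi t)) by (unfold plus, zero; simpl; ring).
apply (is_derive_plus (K := R_AbsRing) (V := R_NormedModule)).
- apply (is_derive_const (K := R_AbsRing) (V := R_NormedModule)).
- apply (is_derive_RInt (V := R_CompleteNormedModule) phi _ 0).
  + apply filter_forall. intros. apply (RInt_correct (V := R_CompleteNormedModule)), phi_ex_RInt.
  + apply phi_continuous.
Qed.

Lemma has_integral_from_lim f a l :
  has_integral_from f a l -> is_lim (fun b => RInt f a b) p_infty l.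
Proof.
intros [Hex Hlim]. apply is_lim_spec. intros eps.
destruct (Hlim eps (cond_pos eps)) as [B HB].
exists (Rmax a B). intros b Hb.
destruct (Hex b) as [pr _]; [generalize (Rmax_l a B); lra |].
rewrite (RInt_Reals f a b pr). apply HB. generalize (Rmax_r a B); lra.
Qed.

Lemma has_integral_upto_lim f a l :
  has_integral_upto f a l -> is_lim (fun b => RInt f b a) m_infty l.
Proof.
intros [Hex Hlim]. apply is_lim_spec. intros eps.
destruct (Hlim eps (cond_pos eps)) as [B HB].
exists (Rmin a B). intros b Hb.
destruct (Hex b) as [pr _]; [generalize (Rmin_l a B); lra |].
rewrite (RInt_Reals f b a pr). apply HB. generalize (Rmin_r a B); lra.
Qed.

Lemma is_Phi_eq z p : is_Phi z p -> p = Phi z.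
Proof.
intros Hp. apply has_integral_upto_lim, is_lim_unique in Hp.
rewrite (is_lim_unique _ _ _ (is_lim_Phi z)) in Hp. congruence.
Qed.

(* Gaussian decay: e^(t^2/2) > t^2/2, so t phi(t) <= 2 / t for t > 0. *)
Lemma phi_tail_bound t : 0 < t -> t * phi t <= 2 / t.
Proof.
intros Ht. unfold phi.
assert (Hs : 1 <= sqrt (2 * PI)).
{ rewrite <- sqrt_1. apply sqrt_le_1_alt. generalize PI2_3_2; lra. }
assert (Hexp := exp_ineq1 (t * t / 2) ltac:(nra)).
assert (Hpos := exp_pos (t * t / 2)).
replace (- (t * t) / 2) with (- (t * t / 2)) by field. rewrite exp_Ropp.
apply (Rle_trans _ (t * / exp (t * t / 2))).
- apply Rmult_le_compat_l; [lra |]. unfold Rdiv.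
  rewrite <- (Rmult_1_r (/ exp _)) at 2. apply Rmult_le_compat_l.
  + left; apply Rinv_0_lt_compat; lra.
  + rewrite <- Rinv_1. apply Rinv_le_contravar; lra.
- replace (2 / t) with (t * / (t * t / 2)) by (field; lra).
  apply Rmult_le_compat_l; [lra |]. apply Rinv_le_contravar; nra.
Qed.

Lemma is_lim_id_phi : is_lim (fun t => t * phi t) p_infty 0.
Proof.
apply (is_lim_le_le_loc (fun _ => 0) (fun t => 2 * / t)).
- exists 0. intros t Ht. split.
  + apply Rmult_le_pos; [lra | left; apply phi_pos].
  + apply phi_tail_bound, Ht.
- apply is_lim_const.
- replace (Finite 0) with (Rbar_mult 2 (Rbar_inv p_infty)) by (simpl; f_equal; ring).
  apply is_lim_scal_l, is_lim_inv; [apply is_lim_id | discriminate].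
Qed.

Lemma is_lim_phi : is_lim phi p_infty 0.
Proof.
apply (is_lim_le_le_loc (fun _ => 0) (fun t => t * phi t)).
- exists 1. intros t Ht. assert (H := phi_pos t). split; nra.
- apply is_lim_const.
- apply is_lim_id_phi.
Qed.

Lemma is_lim_Phi_p_infty : is_lim Phi p_infty 1.
Proof.
replace 1 with (1 / 2 + 1 / 2) by field.
apply is_lim_plus'; [apply is_lim_const | apply is_lim_RInt_phi].
Qed.

(* An antiderivative of (A + B t + C t^2) phi(t), using phi' = -t phi. *)
Definition quad_antideriv (A B C t : R) : R := (A + C) * Phi t - (B + C * t) * phi t.

Lemma quad_antideriv_derive A B C t :
  is_derive (quad_antideriv A B C) t ((A + B * t + C * (t * t)) * phi t).
Proof.
unfold quad_antideriv. assert (DPhi := Phi_derive t). assert (Dphi := phi_derive t).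
auto_derive.
{ repeat split; eexists; eassumption. }
replace (Derive (fun x => Phi x) t) with (phi t) by (symmetry; apply is_derive_unique, DPhi).
replace (Derive (fun x => phi x) t) with (- t * phi t) by (symmetry; apply is_derive_unique, Dphi).
ring.
Qed.

(* At +oo the Gaussian term vanishes and Phi tends to 1. *)
Lemma quad_antideriv_lim A B C : is_lim (quad_antideriv A B C) p_infty (A + C).
Proof.
unfold quad_antideriv.
replace (Finite (A + C)) with (Finite ((A + C) * 1 - (B * 0 + C * 0))) by (f_equal; ring).
apply is_lim_minus'.
- apply (is_lim_scal_l Phi (A + C) p_infty 1), is_lim_Phi_p_infty.
- apply (is_lim_ext (fun t => B * phi t + C * (t * phi t))); [intros; ring |].
  apply is_lim_plus'; [apply (is_lim_scal_l phi B p_infty 0), is_lim_phi |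
                       apply (is_lim_scal_l _ C p_infty 0), is_lim_id_phi].
Qed.

Lemma gauss_tail_quadratic (f : R -> R) (A B C z I : R) :
  (forall t, f t = (A + B * t + C * (t * t)) * phi t) ->
  has_integral_from f z I ->
  I = (A + C) * (1 - Phi z) + (B + C * z) * phi z.
Proof.
intros Hf HI.
assert (Hcont : forall t, continuous f t).
{ intros t. apply (ex_derive_continuous (K := R_AbsRing) (V := R_NormedModule)).
  apply (ex_derive_ext (fun u => (A + B * u + C * (u * u)) * phi u) f t).
  - intros; symmetry; apply Hf.
  - auto_derive. exists (- t * phi t). apply phi_derive. }
assert (HRInt : forall b, RInt f z b = quad_antideriv A B C b - quad_antideriv A B C z).
{ intros b. apply is_RInt_unique, (is_RInt_derive (V := R_CompleteNormedModule)); [| auto].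
  intros t _. rewrite Hf. apply quad_antideriv_derive. }
assert (Hlim := is_lim_minus' _ _ p_infty _ _ (quad_antideriv_lim A B C)
                  (is_lim_const (quad_antideriv A B C z) p_infty)).
assert (HI' := has_integral_from_lim _ _ _ HI).
apply (is_lim_ext _ _ _ _ HRInt), is_lim_unique in HI'.
rewrite (is_lim_unique _ _ _ Hlim) in HI'. injection HI' as <-.
unfold quad_antideriv. ring.
Qed.

Lemma le_of_derive_nonneg (f df : R -> R) (a b : R) :
  a <= b -> (forall t, is_derive f t (df t)) ->
  (forall t, a <= t <= b -> 0 <= df t) -> f a <= f b.
Proof.
intros Hab Hd Hpos.
destruct (MVT_gen f a b df) as [c [Hc Hmvt]].
- intros; apply Hd.
- intros t _. apply continuity_pt_filterlim.
  apply (ex_derive_continuous (K := R_AbsRing) (V := R_NormedModule)).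
  exists (df t). apply Hd.
- rewrite Rmin_left, Rmax_right in Hc by lra.
  assert (0 <= df c * (b - a)) by (apply Rmult_le_pos; [apply Hpos, Hc | lra]). lra.
Qed.

(* The function h of the gap estimate: with z = z_x and b0 = sqrt(2 log M) + a,
   g_low(x) - x is proportional to b0^2 r / log M - h(z). *)
Definition gap_profile (b0 t : R) : R :=
  1 - Phi t + t * (t + 2 * b0) * Phi t + (t + 2 * b0) * phi t.

Lemma gap_profile_derive b0 t : is_derive (gap_profile b0) t (2 * (t + b0) * Phi t).
Proof.
unfold gap_profile. assert (DPhi := Phi_derive t). assert (Dphi := phi_derive t).
auto_derive.
{ repeat split; eexists; eassumption. }
replace (Derive (fun x => Phi x) t) with (phi t) by (symmetry; apply is_derive_unique, DPhi).
replace (Derive (fun x => phi x) t) with (- t * phi t) by (symmetry; apply is_derive_unique, Dphi).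
ring.
Qed.

(* h increases on [-b0, +oo) since Phi >= 0; we use it on [-b0, 0]. *)
Lemma gap_profile_le b0 z : - b0 <= z <= 0 -> gap_profile b0 z <= gap_profile b0 0.
Proof.
intros Hz. apply (le_of_derive_nonneg _ _ _ _ (proj2 Hz) (gap_profile_derive b0)).
intros t Ht. assert (H := Phi_nonneg t). apply Rmult_le_pos; [lra | exact H].
Qed.

Lemma gap_profile_0 b0 : gap_profile b0 0 = 1 / 2 + 2 * b0 * phi 0.
Proof. unfold gap_profile. rewrite Phi_0. field. Qed.

Lemma gap_identity (nu k b0 z p ph x r L I : R) :
  nu <> 0 -> L <> 0 ->
  k * ((z + b0) * (z + b0)) = 1 - nu ->
  1 - x * nu = k * (b0 * b0) * (1 + r / L) ->
  I = (1 - k * (b0 * b0) + - k) * (1 - p) + (- (2 * k * b0) + - k * z) * ph ->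
  p + 1 / nu * I - x =
  k / nu * (b0 * b0 * r / L - (1 - p + z * (z + 2 * b0) * p + (z + 2 * b0) * ph)).
Proof.
intros Hnu HL Hradius Hx ->.
apply (Rmult_eq_reg_l nu); [| exact Hnu].
replace (nu * (p + 1 / nu * _ - x)) with (nu * p + (1 - k * (b0 * b0) + - k) * (1 - p)
  + (- (2 * k * b0) + - k * z) * ph - x * nu) by (field; exact Hnu).
replace (x * nu) with (1 - k * (b0 * b0) * (1 + r / L)) by lra.
replace (nu * p) with ((1 - k * ((z + b0) * (z + b0))) * p) by (rewrite Hradius; ring).
field. split; assumption.
Qed.

(* The gap estimate in normalized variables: the constraints force z into [-b0, 0],
   where h(z) <= h(0) = b0^2 r1 / L, and k b0^2 >= 1 - nu. *)
Lemma normalized_gap (nu k b0 z x r r1 L I : R) :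
  0 < nu < 1 -> 0 < L -> 0 <= r1 <= r -> 0 <= b0 -> 0 <= z + b0 ->
  k * ((z + b0) * (z + b0)) = 1 - nu ->
  1 - x * nu = k * (b0 * b0) * (1 + r / L) ->
  (1 - nu) * (1 + r / L) <= 1 - x * nu ->
  1 / 2 + 2 * b0 * phi 0 = b0 * b0 * r1 / L ->
  I = (1 - k * (b0 * b0) + - k) * (1 - Phi z) + (- (2 * k * b0) + - k * z) * phi z ->
  Phi z + 1 / nu * I - x >= (1 - nu) / nu * ((r - r1) / L).
Proof.
intros Hnu HL Hr Hb0 Hzb0 Hradius Hx Hkey Hr1 HI.
assert (HrL : 0 < 1 + r / L) by (assert (0 <= r / L) by (apply Rdiv_le_0_compat; lra); lra).
assert (Hk_b0 : 1 - nu <= k * (b0 * b0)).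
{ apply (Rmult_le_reg_r (1 + r / L)); [exact HrL | lra]. }
assert (Hk : 0 < k) by nra.
assert (Hz : - b0 <= z <= 0).
{ assert (Hzz : z * (z + 2 * b0) <= 0).
  { apply (Rmult_le_reg_l k); [exact Hk | nra]. }
  split; [lra | nra]. }
rewrite (gap_identity nu k b0 z (Phi z) (phi z) x r L I) by (lra || assumption).
fold (gap_profile b0 z).
assert (Hh := gap_profile_le b0 z Hz). rewrite gap_profile_0, Hr1 in Hh.
assert (Hgap : 0 <= (r - r1) / L) by (apply Rdiv_le_0_compat; lra).
apply Rle_ge, (Rle_trans _ (k * (b0 * b0) / nu * ((r - r1) / L))).
- apply Rmult_le_compat_r; [exact Hgap |].
  apply Rmult_le_compat_r; [left; apply Rinv_0_lt_compat; lra | exact Hk_b0].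
- replace (k * (b0 * b0) / nu * ((r - r1) / L))
    with (k / nu * (b0 * b0 * r / L - b0 * b0 * r1 / L)) by (field; lra).
  apply Rmult_le_compat_l; [apply Rdiv_le_0_compat; lra | lra].
Qed.

(* b0 = sqrt(2 log M) + a = sqrt(2 log M) (1 + delta_a): the glow integrand is a
   quadratic in z + b0 times phi(z). *)
Definition shift (M : nat) (a : R) : R := sqrt (2 * logM M) + a.

(* k = (R / C') u_x / (2 log M), the coefficient of (z + b0)^2 in the integrand. *)
Definition kcoef (M : nat) (snr C' Rt x : R) : R := Rt / C' * u_x snr x / (2 * logM M).

Lemma logM_pos (M : nat) : (2 <= M)%nat -> 0 < logM M.
Proof.
intros HM. unfold logM. rewrite <- ln_1. apply ln_increasing; [lra |].
apply le_INR in HM. simpl in HM. lra.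
Qed.

Lemma sqrt_2logM_sq (M : nat) :
  0 < logM M -> sqrt (2 * logM M) * sqrt (2 * logM M) = 2 * logM M.
Proof. intros HL. apply sqrt_sqrt. lra. Qed.

Lemma delta_a_nonneg (M : nat) (a : R) : 0 < logM M -> 0 <= a -> 0 <= delta_a M a.
Proof. intros HL Ha. apply Rdiv_le_0_compat; [exact Ha | apply sqrt_lt_R0; lra]. Qed.

Lemma shift_eq (M : nat) (a : R) : 0 < logM M ->
  shift M a = sqrt (2 * logM M) * (1 + delta_a M a).
Proof.
intros HL. assert (0 < sqrt (2 * logM M)) by (apply sqrt_lt_R0; lra).
unfold shift, delta_a. field. lra.
Qed.

Lemma nu_bounds (snr : R) : 0 < snr -> 0 < nu snr < 1.
Proof.
intros Hsnr. unfold nu. split; [apply Rdiv_lt_0_compat; lra |].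
apply (Rmult_lt_reg_r (1 + snr)); [lra |]. unfold Rdiv. rewrite Rmult_assoc, Rinv_l; lra.
Qed.

Lemma inv_snr_nu (snr : R) : 0 < snr -> 1 / snr = (1 - nu snr) / nu snr.
Proof. intros Hsnr. unfold nu. field. lra. Qed.

Lemma u_x_pos (snr x : R) : 0 < snr -> x <= 1 -> 0 < u_x snr x.
Proof. intros Hsnr Hx. assert (H := nu_bounds snr Hsnr). unfold u_x. nra. Qed.

Lemma r1_nonneg (M : nat) (a : R) : 0 < logM M -> 0 <= a -> 0 <= r1 M a.
Proof.
intros HL Ha. assert (Hd := delta_a_nonneg M a HL Ha).
assert (0 < sqrt PI) by (apply sqrt_lt_R0; generalize PI_RGT_0; lra).
unfold r1, r0, Rsqr. apply Rplus_le_le_0_compat.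
- apply Rmult_le_pos; [| lra]. apply Rdiv_le_0_compat; nra.
- apply Rdiv_le_0_compat; [apply sqrt_pos | nra].
Qed.

Lemma rate_of_pos (M : nat) (a C' r : R) : 0 < logM M -> 0 <= a -> 0 < C' -> 0 <= r ->
  0 < rate_of M a C' r.
Proof.
intros HL Ha HC Hr. assert (Hd := delta_a_nonneg M a HL Ha).
assert (0 <= r / logM M) by (apply Rdiv_le_0_compat; lra).
unfold rate_of, Rsqr. apply Rdiv_lt_0_compat; [exact HC | nra].
Qed.

Lemma glow_integrand_quadratic (M : nat) (snr a C' Rt x t : R) : 0 < logM M ->
  let k := kcoef M snr C' Rt x in let b0 := shift M a in
  glow_integrand M snr a C' Rt x t =
  (1 - k * (b0 * b0) + - (2 * k * b0) * t + - k * (t * t)) * phi t.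
Proof.
intros HL k b0. unfold glow_integrand, k, kcoef, b0, shift, Rsqr.
assert (Hs := sqrt_2logM_sq M HL). assert (0 < sqrt (2 * logM M)) by (apply sqrt_lt_R0; lra).
set (s := sqrt (2 * logM M)) in *. set (c := Rt / C' * u_x snr x).
f_equal. rewrite <- Hs. field. lra.
Qed.

Lemma z_x_shift (M : nat) (snr a C' Rt x : R) :
  z_x M snr a C' Rt x + shift M a =
  sqrt ((1 - nu snr) * C' / Rt / u_x snr x) * sqrt (2 * logM M).
Proof. unfold z_x, mu, shift, u_x. ring. Qed.

Lemma z_x_shift_nonneg (M : nat) (snr a C' Rt x : R) : 0 <= z_x M snr a C' Rt x + shift M a.
Proof. rewrite z_x_shift. apply Rmult_le_pos; apply sqrt_pos. Qed.

Lemma kcoef_radius (M : nat) (snr a C' Rt x : R) :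
  0 < logM M -> 0 < C' -> 0 < Rt -> 0 < u_x snr x -> nu snr <= 1 ->
  let z := z_x M snr a C' Rt x in let b0 := shift M a in
  kcoef M snr C' Rt x * ((z + b0) * (z + b0)) = 1 - nu snr.
Proof.
intros HL HC HRt Hu Hnu z b0. unfold z, b0. rewrite z_x_shift.
replace (sqrt _ * sqrt (2 * logM M) * (sqrt _ * sqrt (2 * logM M)))
  with (sqrt ((1 - nu snr) * C' / Rt / u_x snr x) * sqrt ((1 - nu snr) * C' / Rt / u_x snr x)
        * (sqrt (2 * logM M) * sqrt (2 * logM M))) by ring.
rewrite sqrt_2logM_sq, sqrt_sqrt by (auto; unfold Rdiv; repeat apply Rmult_le_pos;
  try (left; apply Rinv_0_lt_compat); lra).
unfold kcoef. field. repeat split; lra.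
Qed.

Lemma kcoef_rate (M : nat) (snr a C' r x : R) :
  0 < logM M -> 0 <= a -> 0 < C' -> 0 <= r ->
  u_x snr x = kcoef M snr C' (rate_of M a C' r) x * (shift M a * shift M a) * (1 + r / logM M).
Proof.
intros HL Ha HC Hr. rewrite shift_eq by exact HL.
assert (Hd := delta_a_nonneg M a HL Ha).
assert (Hs := sqrt_2logM_sq M HL).
unfold kcoef, rate_of, Rsqr. set (s := sqrt (2 * logM M)) in *.
replace (s * (1 + delta_a M a) * (s * (1 + delta_a M a)))
  with (2 * logM M * ((1 + delta_a M a) * (1 + delta_a M a))) by (rewrite <- Hs; ring).
field. repeat split; nra.
Qed.

Lemma x_r_bound (M : nat) (snr r x : R) :
  0 < snr -> 0 < logM M -> x <= x_r M snr r ->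
  (1 - nu snr) * (1 + r / logM M) <= u_x snr x.
Proof.
intros Hsnr HL Hx. unfold x_r in Hx. unfold u_x, nu.
replace ((1 - snr / (1 + snr)) * (1 + r / logM M)) with ((1 + r / logM M) / (1 + snr)) by (field; lra).
replace (1 - x * (snr / (1 + snr))) with ((1 + snr - x * snr) / (1 + snr)) by (field; lra).
apply Rmult_le_compat_r; [left; apply Rinv_0_lt_compat; lra |].
assert (x * snr <= snr - r / logM M).
{ replace (snr - r / logM M) with ((1 - 1 / snr * (r / logM M)) * snr) by (field; lra).
  apply Rmult_le_compat_r; lra. }
lra.
Qed.

(* The definition of r1 is exactly h(0) = 1/2 + 2 b0 phi(0) rescaled by log M / b0^2. *)
Lemma r1_spec (M : nat) (a : R) : 0 < logM M -> 0 <= a ->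
  1 / 2 + 2 * shift M a * phi 0 = shift M a * shift M a * r1 M a / logM M.
Proof.
intros HL Ha. rewrite shift_eq by exact HL.
assert (Hd := delta_a_nonneg M a HL Ha).
assert (HsL : 0 < sqrt (logM M)) by (apply sqrt_lt_R0; lra).
assert (HsLL : sqrt (logM M) * sqrt (logM M) = logM M) by (apply sqrt_sqrt; lra).
assert (Hs2 : sqrt 2 * sqrt 2 = 2) by (apply sqrt_sqrt; lra).
assert (0 < sqrt 2) by (apply sqrt_lt_R0; lra).
assert (0 < sqrt PI) by (apply sqrt_lt_R0; generalize PI_RGT_0; lra).
unfold phi, r1, r0, Rsqr. rewrite !sqrt_mult by (generalize PI_RGT_0; lra).
replace (- (0 * 0) / 2) with 0 by field. rewrite exp_0.
set (q := sqrt (logM M)) in *. set (t := sqrt 2) in *. set (d := delta_a M a) in *.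
rewrite <- HsLL.
replace (t * q * (1 + d) * (t * q * (1 + d))) with (2 * (q * q) * ((1 + d) * (1 + d)))
  by (rewrite <- Hs2; ring).
field. repeat split; lra.
Qed.

Theorem lemma7 (M : nat) (snr a C' r x : R) :
  (2 <= M)%nat -> 0 < snr -> 0 <= a -> 0 < C' ->
  r > r1 M a ->
  0 <= x <= 1 -> x <= x_r M snr r ->
  forall p I : R,
    is_Phi (z_x M snr a C' (rate_of M a C' r) x) p ->
    has_integral_from (glow_integrand M snr a C' (rate_of M a C' r) x)
      (z_x M snr a C' (rate_of M a C' r) x) I ->
    p + (1 / nu snr) * I - x >= gap M snr a r.
Proof.
intros HM Hsnr Ha HC Hr Hx Hxr p I Hp HI.
assert (HL := logM_pos M HM).
assert (Hr1 := r1_nonneg M a HL Ha).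
assert (Hnu := nu_bounds snr Hsnr).
assert (Hu := u_x_pos snr x Hsnr (proj2 Hx)).
assert (HRt := rate_of_pos M a C' r HL Ha HC ltac:(lra)).
assert (Hb0 : 0 <= shift M a) by (unfold shift; assert (H := sqrt_pos (2 * logM M)); lra).
rewrite (is_Phi_eq _ _ Hp). unfold gap. rewrite (inv_snr_nu snr Hsnr).
apply (normalized_gap _ (kcoef M snr C' (rate_of M a C' r) x) (shift M a)); try lra.
- apply z_x_shift_nonneg.
- apply kcoef_radius; lra.
- apply kcoef_rate; lra.
- apply x_r_bound; assumption.
- apply r1_spec; assumption.
- apply (gauss_tail_quadratic _ _ _ _ _ _ (fun t => glow_integrand_quadratic M snr a C' _ x t HL) HI).
Qed.
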